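(* For any integers $k, m \ge 1$: if both $k$ and $m$ are even, then \[ 2O(k,m) = B(k,m) + B\!\left(\tfrac{k}{2}, \tfrac{m-2}{2}\right) - B\!\left(\tfrac{k}{2}, \tfrac{m}{2}\right) - B\!\left(\tfrac{k-2}{2}, \tfrac{m-2}{2}\right); \] otherwise, \[ 2O(k,m) = B(k,m) - 2B\!\left(\left\lfloor \tfrac{k}{2}\right\rfloor, \left\lfloor \tfrac{m-1}{2}\right\rfloor\right). \]
   Context: For $k \ge 1$, $m \ge 0$, $\mathcal{B}(k,m)$ is the set of binary words of length $m$ that avoid (do not contain as a not-necessarily-contiguous subsequence) every word $0^j1^{k-j}$, $j\in\{0,\dots,k\}$, and $B(k,m) = |\mathcal{B}(k,m)|$; also $B(0,m) = 0$ for all $m \ge 0$ (so $B(k,0)=1$ for $k\ge1$). For a binary word $w=w_1\cdots w_n$, $G(w)$ is the permutation of $[n]$ listing first the positions of zeros of $w$ in increasing order, then the positions of ones in increasing order; $w$ is odd if $G(w)$ has an odd number of inversions. $O(k,m)$ is the number of odd words in $\mathcal{B}(k,m)$. *)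

From mathcomp Require Import all_boot all_algebra.
Set Implicit Arguments. Unset Strict Implicit. Unset Printing Implicit Defensive.

(* Binary words of length m: m.-tuple bool, with false = 0 and true = 1. *)

Definition pat (k j : nat) : seq bool := nseq j false ++ nseq (k - j) true.

Definition avoids_all (k : nat) (w : seq bool) : bool :=
  [forall j : 'I_k.+1, ~~ subseq (pat k j) w].

Definition calB (k m : nat) : {set m.-tuple bool} :=
  [set w : m.-tuple bool | avoids_all k w].

Definition B (k m : nat) : nat := if k == 0 then 0 else #|calB k m|.

(* G(w) as the one-line notation (list of values in [n], 1-based positions):
   positions of zeros in increasing order, then positions of ones. *)
Definition Gseq (w : seq bool) : seq nat :=
  [seq i <- iota 1 (size w) | ~~ nth false w i.-1]
  ++ [seq i <- iota 1 (size w) | nth false w i.-1].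

Definition inversions (s : seq nat) : nat :=
  #|[set p : 'I_(size s) * 'I_(size s) |
      (p.1 < p.2) && (nth 0 s p.2 < nth 0 s p.1)]|.

Definition odd_word (w : seq bool) : bool := odd (inversions (Gseq w)).

Definition O (k m : nat) : nat := #|[set w in calB k m | odd_word w]|.

From mathcomp Require Import all_boot all_algebra zify ring.
Set Implicit Arguments. Unset Strict Implicit. Unset Printing Implicit Defensive.
Import GRing.Theory.

(* A
   word avoids every pattern 0^j 1^(k-j) iff its pattern length [patlen w],
   the length of its longest subsequence 0^j 1^r, is below k; and G(w) is
   odd iff the number [inv10 w] of pairs (1, later 0) in w is odd.  Hence
   2 O(k,m) = B(k,m) - S(k,m), where S(k,m) counts the words of length m
   avoiding the patterns of length k with sign (-1)^(inv10 w).

   To evaluate S, the (signed) counts [cnt] of words with given length,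
   pattern length l and number o of ones satisfy a recurrence obtained by
   removing the first letter.  It yields closed forms in terms of the
   ballot-like numbers [ballot n i]: for the plain counts, and for the signed
   counts separately in odd length 2n+1 and even length 2n+2.  Summing over
   o and grouping the pattern lengths in pairs gives S(k, 2n+1) = 2 B(k/2, n)
   and S(k+1, 2n+2) = 2 B(k/2, n) - [k odd] ballot n (k/2); together with
   the recurrence B(a+1, n+1) = B(a, n) + B(a+1, n) - ballot n a this is the
   theorem. *)

Fixpoint words (m : nat) : seq (seq bool) :=
  if m is m'.+1 then [seq false :: w | w <- words m'] ++ [seq true :: w | w <- words m']
  else [:: [::]].

Lemma size_words m w : w \in words m -> size w = m.
Proof.
elim: m w => [|m IH] w /=; first by rewrite inE => /eqP ->.
by rewrite mem_cat => /orP [] /mapP [v /IH + ->] /= => ->.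
Qed.

(* Sums over m-tuples are sums over [words m]; this turns the cardinalities
   of sets of tuples into sums that can be split by the first letter. *)
Lemma big_tuple_words (R : nmodType) m (F : seq bool -> R) :
  (\sum_(t : m.-tuple bool) F t = \sum_(w <- words m) F w)%R.
Proof.
elim: m F => [|m IH] F.
  rewrite /= big_seq1 (big_pred1 [tuple]) // => t.
  by apply/esym/eqP/val_inj; case: t => [[]].
pose cons_tuple (p : bool * m.-tuple bool) : m.+1.-tuple bool := [tuple of p.1 :: p.2].
have cons_bij : bijective cons_tuple.
  exists (fun t : m.+1.-tuple bool => (thead t, [tuple of behead t])).
    by case=> b t; congr pair; apply: val_inj.
  by move=> t; apply: val_inj; case: t => [[|x s] //= _].
rewrite (reindex cons_tuple) /=; last exact: onW_bij.
rewrite -(pair_big xpredT xpredT (fun b t => F (b :: tval t))) /=.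
rewrite big_bool /= big_cat !big_map /= addrC.
by rewrite (IH (fun w => F (true :: w))) (IH (fun w => F (false :: w))).
Qed.

(* [patlen w] is the largest k such that w contains a pattern 0^j 1^(k-j) as
   a subsequence: a leading 0 extends every pattern by one letter, while a
   leading 1 can only start the pattern made of all the ones of the word. *)
Fixpoint patlen (w : seq bool) : nat :=
  if w is b :: w' then
    if b then maxn (patlen w') (count id w').+1 else (patlen w').+1
  else 0.

Lemma subseq_ones r w : subseq (nseq r true) w = (r <= count id w).
Proof.
elim: w r => [|b w IH] [|r] //=.
by case: b => /=; [rewrite IH | rewrite (IH r.+1)]; lia.
Qed.

Lemma count_le_patlen w : count id w <= patlen w.
Proof. by elim: w => [|[] w IH] //=; lia. Qed.

Lemma patlen_max w j r : subseq (nseq j false ++ nseq r true) w -> j + r <= patlen w.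
Proof.
elim: w j r => [|b w IH] [|j] r; rewrite ?add0n ?subseq_ones //=.
- by move=> ones; have := count_le_patlen w; case: b ones => /=; lia.
- case: b => /= sub.
    by have := IH j.+1 r sub; lia.
  by have := IH j r sub; lia.
Qed.

Lemma patlen_witness w k : k <= patlen w ->
  exists j r, j + r = k /\ subseq (nseq j false ++ nseq r true) w.
Proof.
elim: w k => [|b w IH] k.
  by rewrite leqn0 => /eqP ->; exists 0, 0.
case: b; rewrite [patlen _]/=.
  rewrite leq_max => /orP [/IH [[|j] [r [<- sub]]] | le_k].
  - by exists 0, r; move: sub; rewrite !subseq_ones /=; split=> //; lia.
  - by exists j.+1, r.
  - by exists 0, k; rewrite subseq_ones /=; split=> //; lia.
case: k => [|k] le_k; first by exists 0, 0.
have [j [r [<- sub]]] := IH k le_k.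
by exists j.+1, r.
Qed.

Lemma avoids_allE k w : avoids_all k w = (patlen w < k).
Proof.
apply/forallP/idP => [avoid | lt_k j].
  rewrite ltnNge; apply/negP => /patlen_witness [j [r [jr sub]]].
  have lt_j : j < k.+1 by lia.
  by move: (avoid (Ordinal lt_j)); rewrite /pat /= (_ : k - j = r) ?sub //; lia.
apply/negP => /patlen_max; have := ltn_ord j; lia.
Qed.

Fixpoint inv_seq (s : seq nat) : nat :=
  if s is x :: s' then count (fun y => y < x) s' + inv_seq s' else 0.

Fixpoint inv10 (w : seq bool) : nat :=
  if w is b :: w' then (if b then count negb w' else 0) + inv10 w' else 0.

Lemma sum_nth_count (P : pred nat) s :
  \sum_(j < size s) P (nth 0 s j) = count P s.
Proof.
elim: s => [|x s IH]; first by rewrite big_ord0.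
by rewrite /= big_ord_recl /= IH.
Qed.

Lemma inversions_inv_seq s : inversions s = inv_seq s.
Proof.
have -> : inversions s =
    \sum_(i < size s) \sum_(j < size s) ((i < j) && (nth 0 s j < nth 0 s i)).
  rewrite /inversions -sum1_card big_mkcond pair_big /=.
  by apply: eq_bigr => p _; rewrite in_set; case: ifP.
elim: s => [|x s IH]; first by rewrite big_ord0.
rewrite /= big_ord_recl /= big_ord_recl /= add0n -IH -sum_nth_count.
by congr addn; apply: eq_bigr => i _; rewrite big_ord_recl.
Qed.

Definition positions (P : pred bool) (w : seq bool) : seq nat :=
  [seq i <- iota 1 (size w) | P (nth false w i.-1)].

Lemma GseqE w : Gseq w = positions negb w ++ positions id w.
Proof. by []. Qed.

Lemma positions_cons P b w :
  positions P (b :: w) =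
  if P b then 1 :: map succn (positions P w) else map succn (positions P w).
Proof.
rewrite /positions /= (iotaDl 1 1) filter_map /=.
have -> : [seq i <- iota 1 (size w) | preim succn (fun i => P (nth false (b :: w) i.-1)) i]
    = [seq i <- iota 1 (size w) | P (nth false w i.-1)].
  by apply: eq_in_filter => -[|i] //=; rewrite mem_iota.
by case: (P b).
Qed.

Lemma size_positions P w : size (positions P w) = count P w.
Proof.
elim: w => [|b w IH] //.
by rewrite positions_cons /=; case: (P b); rewrite /= size_map IH.
Qed.

Lemma inv_seq_map_succ s : inv_seq (map succn s) = inv_seq s.
Proof. by elim: s => [|x s IH] //=; rewrite IH count_map. Qed.

Lemma inv_seq_mid A x C :
  inv_seq (A ++ x :: C) =
  inv_seq (A ++ C) + count (fun a => x < a) A + count (fun c => c < x) C.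
Proof. by elim: A => [|a A IH] /=; rewrite ?IH ?count_cat /=; lia. Qed.

(* The inversions of G(w) are exactly the pairs (one, later zero) of w: a
   leading 0 puts position 1 first, creating no inversion, while a leading 1
   puts it between the zeros and the ones, creating one inversion with each
   zero. *)
Lemma inv_seq_Gseq w : inv_seq (Gseq w) = inv10 w.
Proof.
elim: w => [|b w IH] //.
rewrite !GseqE !positions_cons in IH *.
have no_lt1 s : count (fun y => y < 1) (map succn s) = 0 by elim: s.
case: b => /=; last by rewrite -map_cat no_lt1 inv_seq_map_succ IH.
rewrite inv_seq_mid -map_cat inv_seq_map_succ IH count_map no_lt1.
have -> : count (preim succn (fun a => 1 < a)) (positions negb w) = count negb w.
  rewrite -size_positions -count_predT; apply: eq_in_count => i.
  by rewrite /positions mem_filter mem_iota /= => /and3P [_ + _].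
lia.
Qed.

Lemma odd_wordE w : odd_word w = odd (inv10 w).
Proof. by rewrite /odd_word inversions_inv_seq inv_seq_Gseq. Qed.

Local Open Scope ring_scope.

Definition sgn (signed : bool) (n : nat) : int := if signed then (-1) ^+ n else 1.

Lemma sgnD sg a b : sgn sg (a + b) = sgn sg a * sgn sg b.
Proof. by case: sg; rewrite /sgn ?exprD ?mulr1. Qed.

Lemma sgnB sg a b : (b <= a)%N -> sgn sg (a - b) = sgn sg (a + b).
Proof. by case: sg => // le_ba; rewrite /sgn -signr_odd oddB // -oddD signr_odd. Qed.

Lemma signE n : (-1) ^+ n = (if odd n then -1 else 1) :> int.
Proof. by rewrite -signr_odd; case: (odd n); rewrite ?expr1 ?expr0. Qed.

Definition cnt sg m l o : int :=
  \sum_(w <- words m) ((patlen w == l) && (count id w == o))%:R * sgn sg (inv10 w).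

Lemma cnt0 sg l o : cnt sg 0 l o = ((l == 0) && (o == 0))%:R.
Proof.
rewrite /cnt /= big_seq1 /sgn; case: sg; rewrite ?expr0 mulr1.
all: by rewrite ![_ == l]eq_sym ![_ == o]eq_sym.
Qed.

(* Splitting by the first letter: a leading 0 raises the pattern length by
   one; a leading 1 adds a one and an inversion with each of the
   m - (o - 1) zeros after it, and changes the pattern length only when
   the ones then form the longest pattern. *)
Lemma cnt_rec sg m l o :
  cnt sg m.+1 l o = (0 < l)%N%:R * cnt sg m l.-1 o
    + (0 < o)%N%:R * sgn sg (m + o.-1) *
      ((o <= l)%N%:R * cnt sg m l o.-1 + (l == o)%:R * cnt sg m l.-1 l.-1).
Proof.
rewrite /cnt /= big_cat !big_map /=; congr (_ + _).
  rewrite mulr_sumr; apply: eq_bigr => w _.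
  rewrite mulrA -natrM add0n; congr (_%:R * _).
  by case: l => [|l] /=; [|rewrite mul1n eqSS].
rewrite !mulr_sumr -big_split /= mulr_sumr.
rewrite big_seq_cond [RHS]big_seq_cond; apply: eq_bigr => w /andP [/size_words size_w _].
have zeros : count negb w = (m - count id w)%N.
  by rewrite -size_w -(count_predC id) addKn.
have ones_le : (count id w <= m)%N by rewrite -size_w count_size.
have := count_le_patlen w.
rewrite zeros sgnD sgnB // [X in X == o](_ : _ = (count id w).+1) //.
case: (eqVneq (count id w).+1 o) => [<- | ne_o] le_patlen; last first.
  rewrite andbF mul0r.
  case: o ne_o => [|o] ne_o; first by rewrite !mul0r.
  move: ne_o; rewrite eqSS => /negbTE c_ne_o /=.
  by case: (eqVneq l o.+1) => [-> /=|_]; rewrite c_ne_o !andbF !mul0r ?mulr0 ?addr0.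
rewrite !succnK !eqxx /= mul1r !andbT.
have -> : (maxn (patlen w) (count id w).+1 == l)%:R =
   (count id w < l)%:R * (patlen w == l)%:R
   + (l == (count id w).+1)%:R * ((patlen w == l.-1) && (count id w == l.-1))%:R :> int.
  by rewrite -!natrM -natrD; congr _%:R; nia.
ring.
Qed.

(* [ballot m l] is the number of words of length m with pattern length l
   and o ones, which turns out not to depend on o in the admissible range
   m - l <= o <= l (lemma [cnt_unsigned]). *)
Fixpoint ballot (m l : nat) : nat :=
  if m is m'.+1 then
    if (m'.+1 <= l.*2)%N && (l <= m'.+1)%N then
      ((if l is l'.+1 then ballot m' l' else 0) + ballot m' l)%N
    else 0%N
  else (l == 0)%N.

Lemma ballot_support m l : ballot m l = 0%N \/ (m <= l.*2 /\ l <= m)%N.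
Proof.
case: m => [|m] /=; first by case: l; [right|left].
by case: ifP => [/andP [H1 H2]|]; [right|left].
Qed.

(* The range of o for which words of length m with pattern length l and o
   ones exist. *)
Definition admissible m l o : bool := ((m <= l + o) && (o <= l))%N.

Lemma admissibleE m l o : admissible m l o = ((m - l <= o) && (o <= l))%N.
Proof. by rewrite /admissible leq_subLR addnC. Qed.

Ltac case_bools := repeat match goal with
  | |- context [nat_of_bool ?b] =>
      lazymatch b with true => fail | false => fail | _ =>
      let E := fresh "E" in case E: b end
  | |- context [if ?b then _ else _] =>
      lazymatch b with true => fail | false => fail | _ =>
      let E := fresh "E" in case E: b end
  end.

Ltac ballot_supports := repeat match goal with
  | |- context [ballot ?a ?b] =>
      lazymatch goal with
      | H : ballot a b = 0%N \/ _ |- _ => fail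
      | _ => let H := fresh "supp" in pose proof (ballot_support a b) as H
      end
  end.

Ltac indicator_arith := ballot_supports; case_bools; lia.

Lemma cnt_unsigned m l o : cnt false m l o = (admissible m l o)%:R * (ballot m l)%:R.
Proof.
elim: m l o => [|m IH] l o; first by rewrite cnt0 /admissible /=; case_bools; lia.
rewrite cnt_rec !IH /sgn /admissible.
case: l => [|l]; case: o => [|o]; rewrite /= ?mul0r ?add0r ?mul1r.
all: try (case: (eqVneq l o) => [->|?]).
all: indicator_arith.
Qed.

(* The recurrence of [ballot], stated without a match on l. *)
Lemma ballotS m l : ballot m.+1 l =
  if (m.+1 <= l.*2)%N && (l <= m.+1)%N then (ballot m l.-1 + ballot m l)%N else 0%N.
Proof. by case: l. Qed.

Lemma half_double_pred j : (j.*2.-1)./2 = j.-1.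
Proof. by case: j => [|j] //=; rewrite uphalf_double. Qed.

Lemma even_or_odd k : (exists j, k = j.*2) \/ (exists j, k = j.*2.+1).
Proof. by rewrite -(odd_double_half k); case: (odd k); [right|left]; exists k./2. Qed.

Lemma nat_parity3 l : l = 0%N \/ (exists j, l = j.*2.+1) \/ (exists j, l = j.*2.+2).
Proof.
case: (even_or_odd l) => [[[|j] ->]|[j ->]]; first by left.
  by right; right; exists j; rewrite doubleS.
by right; left; exists j.
Qed.

Definition sodd n l o : int :=
  (admissible n.*2.+1 l o)%:R * (odd l)%:R * (ballot n l./2)%:R.

Definition seven n l o : int :=
  (admissible n.*2.+2 l o)%:R * (if odd l then (-1) ^+ o else 1) * (ballot n (l.-1)./2)%:R.

Lemma cnt_signed_even n : (forall l o, cnt true n.*2.+1 l o = sodd n l o) ->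
  forall l o, cnt true n.*2.+2 l o = seven n l o.
Proof.
move=> IH l o; rewrite cnt_rec !IH /sodd /seven /admissible /sgn.
case: o => [|o]; rewrite /= ?mul0r ?addr0 ?add0r ?mul1r.
all: case: (nat_parity3 l) => [->|[[j ->]|[j ->]]].
all: rewrite /= ?doubleK ?uphalf_double ?half_double_pred ?signE ?oddD /=.
all: rewrite ?negbK ?odd_double /= ?mul0r ?add0r ?mul1r ?mulr1.
all: indicator_arith.
Qed.

Lemma cnt_signed_odd n : (forall l o, cnt true n.*2.+2 l o = seven n l o) ->
  forall l o, cnt true n.*2.+3 l o = sodd n.+1 l o.
Proof.
move=> IH l o; rewrite cnt_rec !IH /sodd /seven /admissible /sgn ?ballotS.
case: o => [|o]; rewrite /= ?mul0r ?addr0 ?add0r ?mul1r.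
all: case: (nat_parity3 l) => [->|[[j ->]|[j ->]]].
all: rewrite /= ?doubleK ?uphalf_double ?half_double_pred ?signE ?oddD /=.
all: rewrite ?negbK ?odd_double /= ?mul0r ?add0r ?mul1r ?mulr1.
all: indicator_arith.
Qed.

Lemma cnt_signed_one l o : cnt true 1 l o = sodd 0 l o.
Proof.
rewrite cnt_rec !cnt0 /sgn /sodd /admissible !signE.
by case: l => [|[|l]]; case: o => [|[|o]]; rewrite /=; case_bools; lia.
Qed.

Lemma cnt_signed n : (forall l o, cnt true n.*2.+1 l o = sodd n l o) /\
  (forall l o, cnt true n.*2.+2 l o = seven n l o).
Proof.
elim: n => [|n [_ even_len]].
  by split; [|apply: cnt_signed_even]; exact: cnt_signed_one.
have odd_len := cnt_signed_odd even_len.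
by split; [|apply: cnt_signed_even]; exact: odd_len.
Qed.

Definition wsum sg k m : int :=
  \sum_(w <- words m) (patlen w < k)%N%:R * sgn sg (inv10 w).

Lemma card_words m (A : {set m.-tuple bool}) (P : pred (seq bool)) :
  (forall t, (t \in A) = P t) -> #|A|%:R = \sum_(w <- words m) (P w)%:R :> int.
Proof.
move=> memA; rewrite -big_tuple_words -sum1_card natr_sum big_mkcond /=.
by apply: eq_bigr => t _; rewrite memA; case: (P t).
Qed.

Lemma B_wsum k m : (B k m)%:R = wsum false k m.
Proof.
rewrite /B /wsum; case: eqP => [->|_].
  by rewrite big1_seq // => w _; rewrite mul0r.
rewrite (@card_words _ _ (fun w => patlen w < k)%N) => [|t]; last first.
  by rewrite in_set avoids_allE.
by apply: eq_bigr => w _; rewrite /sgn mulr1.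
Qed.

(* Odd words count -1 in the signed sum, so twice their number is the
   difference between the plain and the signed sums. *)
Lemma twice_O k m : 2 * (O k m)%:R = wsum false k m - wsum true k m.
Proof.
rewrite /O (@card_words _ _ (fun w => (patlen w < k)%N && odd (inv10 w))); last first.
  by move=> t; rewrite !in_set avoids_allE odd_wordE.
rewrite /wsum mulr_sumr -sumrB; apply: eq_bigr => w _.
by rewrite /sgn signE mulr1; case: (patlen w < k)%N; case: (odd (inv10 w)).
Qed.

Definition cnt_len sg m l : int := \sum_(o < m.+1) cnt sg m l o.

(* Each word has exactly one pattern length and one number of ones. *)
Lemma sum_indicator n x : \sum_(i < n) ((x == i :> nat)%:R : int) = (x < n)%N%:R.
Proof.
elim: n => [|n IH]; first by rewrite big_ord0.
by rewrite big_ord_recr /= IH; case: (ltngtP x n) => H; lia.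
Qed.

Lemma wsum_cnt_len sg k m : wsum sg k m = \sum_(l < k) cnt_len sg m l.
Proof.
rewrite /wsum /cnt_len /cnt.
under [RHS]eq_bigr do rewrite exchange_big /=.
rewrite exchange_big /= big_seq_cond [RHS]big_seq_cond.
apply: eq_bigr => w /andP [/size_words size_w _].
have ones_lt : (count id w < m.+1)%N by rewrite ltnS -size_w count_size.
rewrite (eq_bigr (fun l : 'I_k => (patlen w == l)%:R * sgn sg (inv10 w) *
            \sum_(o < m.+1) ((count id w == o)%:R : int))); last first.
  move=> l _; rewrite mulr_sumr; apply: eq_bigr => o _.
  by case: (patlen w == l); case: (count id w == o); rewrite /= ?mul0r ?mulr0 ?mul1r ?mulr1.
under eq_bigr do rewrite sum_indicator ones_lt mulr1.
by rewrite -mulr_suml sum_indicator.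
Qed.

Lemma sum_range N a b :
  \sum_(o < N) (((a <= o) && (o <= b))%N%:R : int) = (minn b.+1 N - a)%N%:R.
Proof.
elim: N => [|N IH]; first by rewrite big_ord0; lia.
by rewrite big_ord_recr /= IH; case_bools; lia.
Qed.

Lemma sum_alt N a b :
  \sum_(o < N) (((a <= o) && (o <= b))%N%:R * (-1) ^+ o : int) =
  (-1) ^+ a * (odd (minn b.+1 N - a))%:R.
Proof.
elim: N => [|N IH]; first by rewrite big_ord0; lia.
by rewrite big_ord_recr /= IH !signE; case_bools; lia.
Qed.

(* Plain counts: the admissible numbers of ones form an interval. *)
Lemma cnt_len_unsigned n i :
  cnt_len false n i = (minn i.+1 n.+1 - (n - i))%N%:R * (ballot n i)%:R.
Proof.
rewrite /cnt_len; under eq_bigr do rewrite cnt_unsigned admissibleE.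
by rewrite -mulr_suml sum_range.
Qed.

Lemma cnt_len_signed_odd n l : cnt_len true n.*2.+1 l =
  (minn l.+1 n.*2.+2 - (n.*2.+1 - l))%N%:R * (odd l)%:R * (ballot n l./2)%:R.
Proof.
rewrite /cnt_len; under eq_bigr do rewrite (proj1 (cnt_signed n)) /sodd admissibleE.
by rewrite -!mulr_suml sum_range.
Qed.

Lemma cnt_len_signed_odd_even n i : cnt_len true n.*2.+1 i.*2 = 0.
Proof. by rewrite cnt_len_signed_odd odd_double mulr0 mul0r. Qed.

Lemma cnt_len_signed_odd_odd n i :
  cnt_len true n.*2.+1 i.*2.+1 = 2 * cnt_len false n i.
Proof.
rewrite cnt_len_signed_odd cnt_len_unsigned /= uphalf_double odd_double /=.
by indicator_arith.
Qed.

Lemma cnt_len_signed_even_0 n : cnt_len true n.*2.+2 0 = 0.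
Proof.
rewrite /cnt_len big1 // => o _.
by rewrite (proj2 (cnt_signed n)) /seven /admissible /=; case_bools; lia.
Qed.

Lemma cnt_len_signed_even_odd n i : cnt_len true n.*2.+2 i.*2.+1 = - (ballot n i)%:R.
Proof.
rewrite /cnt_len; under eq_bigr do rewrite (proj2 (cnt_signed n)) /seven admissibleE.
rewrite /= odd_double /= doubleK -!mulr_suml sum_alt !signE.
by indicator_arith.
Qed.

Lemma cnt_len_signed_even_pair n i :
  cnt_len true n.*2.+2 i.*2.+1 + cnt_len true n.*2.+2 i.*2.+2 = 2 * cnt_len false n i.
Proof.
rewrite cnt_len_signed_even_odd cnt_len_unsigned /cnt_len.
under eq_bigr do rewrite (proj2 (cnt_signed n)) /seven admissibleE.
rewrite /= negbK odd_double /= uphalf_double.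
under eq_bigr do rewrite mulr1.
by rewrite -mulr_suml sum_range; indicator_arith.
Qed.

Lemma sum_pairs (F : nat -> int) j :
  \sum_(l < j.*2) F l = \sum_(i < j) (F i.*2 + F i.*2.+1).
Proof.
elim: j => [|j IH]; first by rewrite !big_ord0.
by rewrite doubleS !big_ord_recr /= IH addrA.
Qed.

(* The signed sums, by grouping the pattern lengths in pairs: for odd
   length 2n+1 the pairs (2i, 2i+1) contribute twice the plain count of
   words of length n and pattern length i. *)
Lemma wsum_signed_odd k n : wsum true k n.*2.+1 = 2 * (B k./2 n)%:R.
Proof.
have pairs j : \sum_(i < j) (cnt_len true n.*2.+1 i.*2 + cnt_len true n.*2.+1 i.*2.+1)
    = 2 * (B j n)%:R.
  rewrite B_wsum wsum_cnt_len mulr_sumr; apply: eq_bigr => i _.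
  by rewrite cnt_len_signed_odd_even cnt_len_signed_odd_odd add0r.
rewrite wsum_cnt_len; case: (even_or_odd k) => [[j ->]|[j ->]].
  by rewrite sum_pairs pairs doubleK.
by rewrite big_ord_recr /= sum_pairs pairs cnt_len_signed_odd_even addr0 uphalf_double.
Qed.

(* For even length 2n+2 the pattern length 0 contributes nothing and the
   pairs (2i+1, 2i+2) twice the plain count; an unpaired pattern length
   2j+1 contributes -[ballot n j]. *)
Lemma wsum_signed_even k n :
  wsum true k.+1 n.*2.+2 = 2 * (B k./2 n)%:R - (odd k)%:R * (ballot n k./2)%:R.
Proof.
have pairs j : \sum_(i < j) (cnt_len true n.*2.+2 i.*2.+1 + cnt_len true n.*2.+2 i.*2.+2)
    = 2 * (B j n)%:R.
  rewrite B_wsum wsum_cnt_len mulr_sumr; apply: eq_bigr => i _.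
  exact: cnt_len_signed_even_pair.
rewrite wsum_cnt_len big_ord_recl cnt_len_signed_even_0 add0r.
rewrite (eq_bigr (fun i : 'I_k => cnt_len true n.*2.+2 i.+1)) //.
case: (even_or_odd k) => [[j ->]|[j ->]].
  by rewrite (sum_pairs (fun l => cnt_len true n.*2.+2 l.+1)) pairs odd_double doubleK mul0r subr0.
rewrite big_ord_recr /= (sum_pairs (fun l => cnt_len true n.*2.+2 l.+1)) pairs.
by rewrite cnt_len_signed_even_odd odd_double uphalf_double mul1r.
Qed.

(* A recurrence for B by the first letter: prepending 0 to a word of length
   n keeps it avoiding the patterns of length a+1 iff its pattern length is
   below a, prepending 1 iff its pattern length is at most a, except for the
   [ballot n a] words with pattern length a and a ones. *)
Lemma B_rec a n : (B a.+1 n.+1)%:R = (B a n)%:R + (B a.+1 n)%:R - (ballot n a)%:R :> int.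
Proof.
rewrite !B_wsum /wsum /= big_cat !big_map /=.
have -> : \sum_(w <- words n) ((maxn (patlen w) (count id w).+1 < a.+1)%N%:R
                                * sgn false (count negb w + inv10 w))
   = \sum_(w <- words n) (patlen w < a.+1)%N%:R * sgn false (inv10 w) - cnt false n a a.
  rewrite /cnt -sumrB; apply: eq_bigr => w _; rewrite /sgn !mulr1.
  by have := count_le_patlen w; case_bools; lia.
rewrite cnt_unsigned /admissible.
have [->|[le_n _]] := ballot_support n a; first by rewrite mulr0 !subr0.
by rewrite /= addnn le_n leqnn mul1r addrA.
Qed.

(* 2 O(k,m) = B(k,m) - S(k,m), and S(k,m) is given by [wsum_signed_odd] for
   odd m and by [wsum_signed_even] (with [B_rec] when k is even) for even m. *)
Theorem theorem4p4 (k m : nat) (hk : (1 <= k)%N) (hm : (1 <= m)%N) :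
  if ~~ odd k && ~~ odd m then
    (2 * (O k m)%:Z = (B k m)%:Z + (B k./2 (m - 2)./2)%:Z
                      - (B k./2 m./2)%:Z - (B (k - 2)./2 (m - 2)./2)%:Z)
  else
    (2 * (O k m)%:Z = (B k m)%:Z - 2 * (B k./2 (m - 1)./2)%:Z).
Proof.
rewrite -!natz twice_O -B_wsum.
case: (even_or_odd m) hm => [[[|n] ->] // _|[n ->] _]; last first.
  by rewrite /= odd_double andbF wsum_signed_odd subn1 /= doubleK.
case: k hk => [//|k] _; rewrite doubleS wsum_signed_even.
rewrite subn1 subn2 /= ?doubleK ?uphalf_double odd_double andbT.
case: (even_or_odd k) => [[j ->]|[j ->]] /=; rewrite ?uphalf_double ?odd_double ?doubleK /=.
  by rewrite mul0r subr0.
by rewrite subn2 /= doubleK (B_rec j n) mul1r; ring.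
Qed.
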